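(* Let $\mathbf x\in\mathcal D^m$ have finite quadratic variation along $\pi$, i.e. $\mathbf q_n(t)=\sum_{i:\,t^n_i\le t}(\mathbf{x}(t^n_{i+1})-\mathbf{x}(t^n_i))(\mathbf{x}(t^n_{i+1})-\mathbf{x}(t^n_i))^T$ converges in $(\mathcal D^{m\times m},d)$ to a limit $[\mathbf x]_\pi$. Then: (i) $\mathbf q_n\to[\mathbf x]_\pi$ locally uniformly on $[0,\infty)$ if and only if $\mathbf x$ is continuous; (ii) $F(\mathbf q_n)\to F([\mathbf x]_\pi)$ for every functional $F$ on $\mathcal D^{m\times m}$ which is $J_1$-continuous at $[\mathbf x]_\pi$.
   Context: Let $\pi=(\pi_n)_{n\ge1}$ be a sequence of partitions $\pi_n=(t^n_0,\dots,t^n_{k_n})$ with $0=t^n_0<\dots<t^n_{k_n}<\infty$, $t^n_{k_n}\uparrow\infty$, and mesh tending to $0$ on compacts; sums over $i$ run over $0\le i<k_n$. $\mathcal D^m$, $\mathcal D^{m\times m}$ denote the spaces of càdlàg functions $[0,\infty)\to\mathbb R^m$, resp. $\mathbb R^{m\times m}$, each with a metric $d$ inducing the Skorokhod $J_1$ topology. *)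

From Stdlib Require Import Reals List.
Open Scope R_scope.

(* A partition sequence pi = (pi_n): p n i = t^n_i, k n = k_n. *)
Definition partition_seq (p : nat -> nat -> R) (k : nat -> nat) : Prop :=
  (forall n, p n 0%nat = 0) /\
  (forall n i, (i < k n)%nat -> p n i < p n (S i)) /\
  (forall n, p n (k n) <= p (S n) (k (S n))) /\
  (forall M, exists N, forall n, (N <= n)%nat -> M < p n (k n)) /\
  (forall T eps, 0 < eps -> exists N, forall n, (N <= n)%nat ->
     forall i, (i < k n)%nat -> p n i <= T -> p n (S i) - p n i <= eps).

(* A cadlag function [0,oo) -> R^I, restricted to indices satisfying P,
   represented as f : R -> I -> R (values at t < 0 irrelevant). *)
Definition cadlag {I : Type} (P : I -> Prop) (f : R -> I -> R) : Prop :=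
  forall j, P j ->
    (forall t, 0 <= t -> forall eps, 0 < eps -> exists delta, 0 < delta /\
       forall s, t <= s < t + delta -> Rabs (f s j - f t j) < eps) /\
    (forall t, 0 < t -> exists l, forall eps, 0 < eps -> exists delta, 0 < delta /\
       forall s, 0 <= s -> t - delta < s < t -> Rabs (f s j - l) < eps).

Definition time_change (lam : R -> R) : Prop :=
  lam 0 = 0 /\
  (forall s t, 0 <= s -> s < t -> lam s < lam t) /\
  (forall t, 0 <= t -> forall eps, 0 < eps -> exists delta, 0 < delta /\
     forall s, 0 <= s -> Rabs (s - t) < delta -> Rabs (lam s - lam t) < eps) /\
  (forall u, 0 <= u -> exists t, 0 <= t /\ lam t = u).

(* Convergence in the Skorokhod J1 topology on D([0,oo), R^I)
   (Jacod-Shiryaev, Thm VI.1.14): there are time changes lam_n with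
   sup_t |lam_n t - t| -> 0 and f_n o lam_n -> f uniformly on compacts. *)
Definition J1_conv {I : Type} (P : I -> Prop)
    (fn : nat -> R -> I -> R) (f : R -> I -> R) : Prop :=
  exists lam : nat -> R -> R,
    (forall n, time_change (lam n)) /\
    (forall eps, 0 < eps -> exists N, forall n, (N <= n)%nat ->
       forall t, 0 <= t -> Rabs (lam n t - t) <= eps) /\
    (forall T eps, 0 < eps -> exists N, forall n, (N <= n)%nat ->
       forall t j, 0 <= t <= T -> P j -> Rabs (fn n (lam n t) j - f t j) <= eps).

Definition loc_unif_conv {I : Type} (P : I -> Prop)
    (fn : nat -> R -> I -> R) (f : R -> I -> R) : Prop :=
  forall T eps, 0 < eps -> exists N, forall n, (N <= n)%nat ->
    forall t j, 0 <= t <= T -> P j -> Rabs (fn n t j - f t j) <= eps.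

Definition continuous_on_Rplus {I : Type} (P : I -> Prop) (f : R -> I -> R) : Prop :=
  forall j, P j -> forall t, 0 <= t -> forall eps, 0 < eps -> exists delta, 0 < delta /\
    forall s, 0 <= s -> Rabs (s - t) < delta -> Rabs (f s j - f t j) < eps.

(* J1-continuity of a functional at a point of D (the J1 topology is
   metrizable, so sequential continuity is continuity). *)
Definition J1_continuous_at {I : Type} (P : I -> Prop)
    (F : (R -> I -> R) -> R) (f : R -> I -> R) : Prop :=
  forall yn : nat -> R -> I -> R,
    (forall n, cadlag P (yn n)) -> J1_conv P yn f -> Un_cv (fun n => F (yn n)) (F f).

(* Index sets: components j < m of R^m, entries (j,l) of m x m matrices. *)
Definition vidx (m : nat) (j : nat) : Prop := (j < m)%nat.
Definition midx (m : nat) (jl : nat * nat) : Prop := (fst jl < m)%nat /\ (snd jl < m)%nat.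

Definition qv_approx (p : nat -> nat -> R) (k : nat -> nat) (x : R -> nat -> R)
    (n : nat) (t : R) (jl : nat * nat) : R :=
  fold_right Rplus 0
    (map (fun i => if Rle_dec (p n i) t then
            (x (p n (S i)) (fst jl) - x (p n i) (fst jl)) *
            (x (p n (S i)) (snd jl) - x (p n i) (snd jl)) else 0)
       (seq 0 (k n))).

From Stdlib Require Import Reals List Lra Lia Classical.
Open Scope R_scope.

(* If x is continuous, each jump of q_n is a product of two increments of x
   over one short partition interval, hence small; the jumps of the J1 limit
   Qx are limits of jumps of q_n, so Qx is continuous, and J1 convergence to a
   continuous limit is locally uniform.  Conversely, if x jumps by D at t, the
   diagonal entry of q_n grows by more than D^2/4 across the partition
   interval straddling t, whereas locally uniform convergence to the cadlag Qx
   forces q_n to be nearly constant just left of t.  Part (ii) holds because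
   each q_n is piecewise constant, hence cadlag. *)

Lemma Rabs_le_inv a b : Rabs a <= b -> - b <= a <= b.
Proof.
  intros H. pose proof (Rle_abs a). pose proof (Rle_abs (- a)).
  rewrite Rabs_Ropp in *. lra.
Qed.

Lemma sqr_sub_gt_of_close_ends a b c L :
  Rabs (b - c) < Rabs (c - L) / 4 -> Rabs (a - L) < Rabs (c - L) / 4 ->
  Rabs (c - L) * Rabs (c - L) / 4 < (b - a) * (b - a).
Proof.
  intros Hb Ha.
  assert (Htri : Rabs (c - L) <= Rabs (c - b) + Rabs (b - a) + Rabs (a - L)).
  { replace (c - L) with (c - b + (b - a) + (a - L)) by ring.
    eapply Rle_trans; [apply Rabs_triang | apply Rplus_le_compat_r, Rabs_triang]. }
  rewrite Rabs_minus_sym in Hb.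
  assert (Rabs (b - a) * Rabs (b - a) = (b - a) * (b - a))
    by (rewrite <- Rabs_mult; apply Rabs_right, Rle_ge, Rle_0_sqr).
  assert (Rabs (c - L) / 2 < Rabs (b - a)) by lra.
  pose proof (Rabs_pos (c - L)). nra.
Qed.

Lemma eq_of_Rabs_sub_le_all a b : (forall e, 0 < e -> Rabs (a - b) <= e) -> a = b.
Proof.
  intros H. destruct (Req_dec a b) as [|Hne]; auto.
  assert (0 < Rabs (a - b)) by (apply Rabs_pos_lt; lra).
  specialize (H (Rabs (a - b) / 2) ltac:(lra)). lra.
Qed.

Lemma Rabs_mul_sub_le a1 a2 b1 b2 ca cb r :
  Rabs (a1 - ca) < r -> Rabs (a2 - ca) < r -> Rabs (b1 - cb) < r -> Rabs (b2 - cb) < r ->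
  Rabs ((a2 - a1) * (b2 - b1)) <= 4 * (r * r).
Proof.
  intros Ha1 Ha2 Hb1 Hb2.
  apply Rabs_def2 in Ha1, Ha2, Hb1, Hb2.
  rewrite Rabs_mult.
  replace (4 * (r * r)) with ((2 * r) * (2 * r)) by ring.
  apply Rmult_le_compat; try apply Rabs_pos; apply Rabs_le; lra.
Qed.

Definition sum_upto (K : nat) (f : nat -> R) : R := fold_right Rplus 0 (map f (seq 0 K)).

Lemma fold_right_Rplus_acc (l : list R) (a : R) :
  fold_right Rplus a l = a + fold_right Rplus 0 l.
Proof. induction l as [|b l IH]; simpl; [lra | rewrite IH; lra]. Qed.

Lemma sum_upto_S K f : sum_upto (S K) f = sum_upto K f + f K.
Proof.
  unfold sum_upto. rewrite seq_S, map_app, fold_right_app. simpl.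
  rewrite fold_right_Rplus_acc. lra.
Qed.

Lemma sum_upto_ext K f g :
  (forall i, (i < K)%nat -> f i = g i) -> sum_upto K f = sum_upto K g.
Proof.
  induction K as [|K IH]; intros Hfg; [reflexivity|].
  rewrite !sum_upto_S, (Hfg K), IH; [reflexivity | |lia].
  intros i Hi; apply Hfg; lia.
Qed.

Lemma sum_upto_zero K f : (forall i, (i < K)%nat -> f i = 0) -> sum_upto K f = 0.
Proof.
  intros Hf. rewrite (sum_upto_ext K f (fun _ => 0) Hf).
  unfold sum_upto. induction (seq 0 K) as [|a l IH]; simpl; lra.
Qed.

Lemma sum_upto_sub K f g : sum_upto K f - sum_upto K g = sum_upto K (fun i => f i - g i).
Proof.
  induction K as [|K IH]; [unfold sum_upto; simpl; lra|].
  rewrite !sum_upto_S, <- IH. lra.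
Qed.

Lemma sum_upto_nonneg K f : (forall i, (i < K)%nat -> 0 <= f i) -> 0 <= sum_upto K f.
Proof.
  induction K as [|K IH]; intros Hf; [unfold sum_upto; simpl; lra|].
  rewrite sum_upto_S.
  assert (0 <= f K) by (apply Hf; lia).
  assert (0 <= sum_upto K f) by (apply IH; intros; apply Hf; lia).
  lra.
Qed.

Lemma sum_upto_ge_term K f i0 :
  (forall i, (i < K)%nat -> 0 <= f i) -> (i0 < K)%nat -> f i0 <= sum_upto K f.
Proof.
  induction K as [|K IH]; intros Hf Hi0; [lia|].
  rewrite sum_upto_S.
  assert (0 <= f K) by (apply Hf; lia).
  destruct (Nat.eq_dec i0 K) as [->|Hne].
  - assert (0 <= sum_upto K f) by (apply sum_upto_nonneg; intros; apply Hf; lia). lra.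
  - assert (f i0 <= sum_upto K f) by (apply IH; [intros; apply Hf|]; lia). lra.
Qed.

Lemma Rabs_sum_upto_single K f B :
  (forall i j, (i < K)%nat -> (j < K)%nat -> f i <> 0 -> f j <> 0 -> i = j) ->
  (forall i, (i < K)%nat -> Rabs (f i) <= B) -> 0 <= B ->
  Rabs (sum_upto K f) <= B.
Proof.
  intros Huniq Hbound HB.
  enough (sum_upto K f = 0 \/ exists i0, (i0 < K)%nat /\ sum_upto K f = f i0)
    as [-> | [i0 [Hi0 ->]]] by (rewrite ?Rabs_R0; auto).
  induction K as [|K IH]; [left; reflexivity|].
  rewrite sum_upto_S.
  destruct IH as [H0 | [i0 [Hi0 H0]]].
  - intros; apply Huniq; auto; lia.
  - intros; apply Hbound; lia.
  - right; exists K; split; [lia | lra].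
  - destruct (Req_dec (f K) 0); [right; exists i0; split; [lia | lra]|].
    destruct (Req_dec (f i0) 0); [right; exists K; split; [lia | lra]|].
    assert (i0 = K) by (apply Huniq; auto; lia). lia.
Qed.

Lemma points_gap (g : nat -> R) K t :
  exists d, 0 < d /\ forall i, (i < K)%nat -> g i <> t -> d <= Rabs (g i - t).
Proof.
  induction K as [|K [d [Hd Hgap]]]; [exists 1; split; [lra | intros; lia]|].
  destruct (Req_dec (g K) t) as [HK|HK].
  - exists d; split; auto. intros i Hi Hne.
    destruct (Nat.eq_dec i K) as [->|]; [contradiction | apply Hgap; auto; lia].
  - exists (Rmin d (Rabs (g K - t))). split.
    + apply Rmin_pos; auto. apply Rabs_pos_lt; lra.
    + intros i Hi Hne. destruct (Nat.eq_dec i K) as [->|]; [apply Rmin_r|].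
      eapply Rle_trans; [apply Rmin_l | apply Hgap; auto; lia].
Qed.

Lemma exists_crossing_index (g : nat -> R) t K :
  g 0%nat < t -> t <= g K -> exists i, (i < K)%nat /\ g i < t <= g (S i).
Proof.
  induction K as [|K IH]; intros H0 HK; [lra|].
  destruct (Rlt_le_dec (g K) t) as [HKt|HKt].
  - exists K. split; [lia | lra].
  - destruct (IH H0 HKt) as [i [Hi Hti]]. exists i. split; [lia | auto].
Qed.

Section Partition.

Variables (p : nat -> nat -> R) (k : nat -> nat).
Hypothesis Hp : partition_seq p k.

Lemma partition_lt n i j : (i < j)%nat -> (j <= k n)%nat -> p n i < p n j.
Proof.
  destruct Hp as [_ [Hinc _]].
  induction j as [|j IH]; intros Hij Hjk; [lia|].
  destruct (Nat.eq_dec i j) as [->|Hne]; [apply Hinc; lia|].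
  apply Rlt_trans with (p n j); [apply IH | apply Hinc]; lia.
Qed.

Lemma partition_nonneg n i : (i <= k n)%nat -> 0 <= p n i.
Proof.
  intros Hi. rewrite <- (proj1 Hp n).
  destruct i as [|i]; [lra|]. left. apply partition_lt; lia.
Qed.

Lemma partition_straddle t eta : 0 < t -> 0 < eta ->
  exists N, forall n, (N <= n)%nat -> exists i, (i < k n)%nat /\
    t - eta < p n i < t /\ t <= p n (S i) < t + eta.
Proof.
  intros Ht Heta. destruct Hp as [Hp0 [_ [_ [Hunb Hmesh]]]].
  destruct (Hunb t) as [N1 HN1]. destruct (Hmesh t (eta / 2)) as [N2 HN2]; [lra|].
  exists (max N1 N2). intros n Hn.
  destruct (exists_crossing_index (p n) t (k n)) as [i [Hi Hti]].
  - rewrite Hp0. lra.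
  - left. apply HN1. lia.
  - assert (p n (S i) - p n i <= eta / 2) by (apply HN2; [lia | auto | lra]).
    exists i. split; [auto | lra].
Qed.

End Partition.

Lemma midx_In m jl : midx m jl -> In jl (list_prod (seq 0 m) (seq 0 m)).
Proof.
  destruct jl as [j l]. intros [Hj Hl]. apply in_prod; apply in_seq; simpl in *; lia.
Qed.

Lemma eventually_forall_finite {I : Type} (P : I -> Prop) (l : list I)
    (Q : I -> nat -> Prop) :
  (forall j, P j -> In j l) ->
  (forall j, P j -> exists N, forall n, (N <= n)%nat -> Q j n) ->
  exists N, forall n, (N <= n)%nat -> forall j, P j -> Q j n.
Proof.
  intros Hl HQ.
  enough (exists N, forall n, (N <= n)%nat -> forall j, In j l -> P j -> Q j n)
    as [N HN] by (exists N; intros n Hn j Hj; apply HN; auto).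
  clear Hl. induction l as [|j0 l IH]; [exists 0%nat; intros n _ j []|].
  destruct IH as [N1 HN1].
  assert (HN0 : exists N0, forall n, (N0 <= n)%nat -> P j0 -> Q j0 n).
  { destruct (classic (P j0)) as [Hj0|Hj0].
    - destruct (HQ j0 Hj0) as [N0 HN0]. exists N0. auto.
    - exists 0%nat. intros; contradiction. }
  destruct HN0 as [N0 HN0].
  exists (max N0 N1). intros n Hn j [<-|Hj]; [apply HN0 | apply HN1]; auto; lia.
Qed.

Definition left_limit {I : Type} (f : R -> I -> R) (j : I) (t L : R) : Prop :=
  forall eps, 0 < eps -> exists delta, 0 < delta /\
    forall s, 0 <= s -> t - delta < s < t -> Rabs (f s j - L) < eps.

Lemma cadlag_continuous {I : Type} (P : I -> Prop) (f : R -> I -> R) :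
  cadlag P f ->
  (forall j t L, P j -> 0 < t -> left_limit f j t L -> L = f t j) ->
  continuous_on_Rplus P f.
Proof.
  intros Hf Hjump j Hj t Ht eps Heps.
  destruct (Hf j Hj) as [Hright Hleft].
  destruct (Hright t Ht eps Heps) as [dr [Hdr Hr]].
  destruct (Req_dec t 0) as [->|Ht0].
  - exists dr. split; auto. intros s Hs Hst. apply Hr.
    apply Rabs_def2 in Hst. lra.
  - destruct (Hleft t ltac:(lra)) as [L HL].
    rewrite <- (Hjump j t L Hj ltac:(lra) HL) in *.
    destruct (HL eps Heps) as [dl [Hdl Hl]].
    exists (Rmin dr dl). split; [apply Rmin_pos; auto|].
    intros s Hs Hst. apply Rabs_def2 in Hst.
    pose proof (Rmin_l dr dl). pose proof (Rmin_r dr dl).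
    destruct (Rlt_le_dec s t); [apply Hl | apply Hr]; lra.
Qed.

Lemma continuous_on_Rplus_unif {I : Type} (P : I -> Prop) (f : R -> I -> R) j :
  continuous_on_Rplus P f -> P j -> forall T eps, 0 < eps ->
  exists delta, 0 < delta /\ forall s t, 0 <= s <= T -> 0 <= t <= T ->
    Rabs (s - t) < delta -> Rabs (f s j - f t j) < eps.
Proof.
  intros Hf Hj T eps Heps.
  (* Clamping at [0] extends [f . j] to a function continuous on all of [R]. *)
  assert (Hcont : forall u, continuity_pt (fun u => f (Rmax 0 u) j) u).
  { intros u e He. destruct (Rlt_le_dec u 0) as [Hu|Hu].
    - exists (- u). split; [lra|]. intros y [_ Hy]. simpl in *. unfold R_dist in *.
      apply Rabs_def2 in Hy. rewrite !Rmax_left by lra.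
      rewrite Rminus_diag, Rabs_R0. auto.
    - destruct (Hf j Hj u Hu e He) as [d [Hd Hfd]].
      exists d. split; [auto|]. intros y [_ Hy]. simpl in *. unfold R_dist in *.
      rewrite (Rmax_right 0 u) by auto. apply Hfd; [apply Rmax_l|].
      apply Rabs_def2 in Hy. apply Rabs_def1; unfold Rmax; destruct (Rle_dec 0 y); lra. }
  destruct (Heine _ (fun c => 0 <= c <= T) (compact_P3 0 T) (fun u _ => Hcont u)
              (mkposreal eps Heps)) as [[delta Hdelta] Hunif].
  exists delta. split; auto. intros s t Hs Ht Hst.
  specialize (Hunif s t Hs Ht Hst). simpl in Hunif.
  rewrite !Rmax_right in Hunif by lra. exact Hunif.
Qed.

Lemma J1_conv_continuous_loc_unif {I : Type} (P : I -> Prop) (l : list I)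
    (fn : nat -> R -> I -> R) (f : R -> I -> R) :
  (forall j, P j -> In j l) -> continuous_on_Rplus P f ->
  J1_conv P fn f -> loc_unif_conv P fn f.
Proof.
  intros Hl Hf [lam [Hlam [Hlam_id Hconv]]] T eps Heps.
  destruct (eventually_forall_finite P l
    (fun j n => forall t, 0 <= t <= T -> Rabs (fn n t j - f t j) <= eps) Hl)
    as [N HN]; [|exists N; intros n Hn t j Ht Hj; apply HN; auto].
  intros j Hj.
  destruct (continuous_on_Rplus_unif P f j Hf Hj (T + 1) (eps / 2))
    as [delta [Hdelta Hunif]]; [lra|].
  destruct (Hlam_id (Rmin (delta / 2) 1)) as [N1 HN1]; [apply Rmin_pos; lra|].
  destruct (Hconv (T + 1) (eps / 2)) as [N2 HN2]; [lra|].
  exists (max N1 N2). intros n Hn t Ht.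
  destruct (proj2 (proj2 (proj2 (Hlam n))) t) as [s [Hs Hlam_s]]; [lra|].
  assert (Hst : Rabs (lam n s - s) <= Rmin (delta / 2) 1) by (apply HN1; [lia | auto]).
  pose proof (Rmin_l (delta / 2) 1). pose proof (Rmin_r (delta / 2) 1).
  rewrite Hlam_s in Hst. apply Rabs_le_inv in Hst.
  assert (Hfn : Rabs (fn n (lam n s) j - f s j) <= eps / 2) by (apply HN2; [lia | lra | auto]).
  assert (Hfs : Rabs (f s j - f t j) < eps / 2)
    by (apply Hunif; [lra | lra | apply Rabs_def1; lra]).
  rewrite Hlam_s in Hfn. apply Rabs_le_inv in Hfn. apply Rabs_def2 in Hfs.
  apply Rabs_le. lra.
Qed.

Lemma J1_conv_left_jump {I : Type} (P : I -> Prop) (fn : nat -> R -> I -> R)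
    (f : R -> I -> R) j t0 L :
  J1_conv P fn f -> P j -> 0 < t0 -> left_limit f j t0 L ->
  forall e, 0 < e -> exists N, forall n, (N <= n)%nat -> exists u,
    Rabs (u - t0) <= e /\ Rabs (fn n u j - f t0 j) <= e /\
    forall d, 0 < d -> exists v, u - d < v < u /\ Rabs (fn n v j - L) < 2 * e.
Proof.
  intros [lam [Hlam [Hlam_id Hconv]]] Hj Ht0 HL e He.
  destruct (Hlam_id e He) as [N1 HN1].
  destruct (Hconv t0 e He) as [N2 HN2].
  exists (max N1 N2). intros n Hn. exists (lam n t0).
  split; [apply HN1; [lia | lra]|].
  split; [apply HN2; [lia | lra | auto]|].
  intros d Hd.
  destruct (Hlam n) as [_ [Hincr [Hcont _]]].
  destruct (HL e He) as [dL [HdL HLe]].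
  destruct (Hcont t0 ltac:(lra) d Hd) as [dc [Hdc Hlam_d]].
  set (s := t0 - Rmin t0 (Rmin dL dc) / 2).
  pose proof (Rmin_l t0 (Rmin dL dc)). pose proof (Rmin_r t0 (Rmin dL dc)).
  pose proof (Rmin_l dL dc). pose proof (Rmin_r dL dc).
  assert (Hmin : 0 < Rmin t0 (Rmin dL dc)) by (repeat apply Rmin_pos; auto).
  exists (lam n s). split.
  - assert (lam n s < lam n t0) by (apply Hincr; unfold s; lra).
    assert (Hlam_s : Rabs (lam n s - lam n t0) < d)
      by (apply Hlam_d; [unfold s; lra | apply Rabs_def1; unfold s; lra]).
    apply Rabs_def2 in Hlam_s. lra.
  - assert (Hfn : Rabs (fn n (lam n s) j - f s j) <= e) by (apply HN2; [lia | unfold s; lra | auto]).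
    assert (Hfs : Rabs (f s j - L) < e) by (apply HLe; unfold s; lra).
    apply Rabs_le_inv in Hfn. apply Rabs_def2 in Hfs. apply Rabs_def1; lra.
Qed.

Lemma loc_unif_conv_left_osc {I : Type} (P : I -> Prop) (fn : nat -> R -> I -> R)
    (f : R -> I -> R) j t0 L :
  loc_unif_conv P fn f -> P j -> left_limit f j t0 L ->
  forall e, 0 < e -> exists eta N, 0 < eta /\ forall n, (N <= n)%nat ->
    forall u v, 0 <= u -> 0 <= v -> t0 - eta < u < t0 -> t0 - eta < v < t0 ->
    Rabs (fn n u j - fn n v j) <= e.
Proof.
  intros Hconv Hj HL e He.
  destruct (HL (e / 4)) as [eta [Heta Hf]]; [lra|].
  destruct (Hconv t0 (e / 4)) as [N HN]; [lra|].
  exists eta, N. split; auto. intros n Hn u v Hu Hv Hut Hvt.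
  pose proof (Rabs_le_inv _ _ (HN n Hn u j ltac:(lra) Hj)).
  pose proof (Rabs_le_inv _ _ (HN n Hn v j ltac:(lra) Hj)).
  pose proof (Rabs_def2 _ _ (Hf u Hu Hut)).
  pose proof (Rabs_def2 _ _ (Hf v Hv Hvt)).
  apply Rabs_le. lra.
Qed.

Section QuadraticVariation.

Variables (p : nat -> nat -> R) (k : nat -> nat) (x : R -> nat -> R).

Definition qv_incr (n : nat) (jl : nat * nat) (i : nat) : R :=
  (x (p n (S i)) (fst jl) - x (p n i) (fst jl)) *
  (x (p n (S i)) (snd jl) - x (p n i) (snd jl)).

Lemma qv_approx_sum n t jl :
  qv_approx p k x n t jl =
  sum_upto (k n) (fun i => if Rle_dec (p n i) t then qv_incr n jl i else 0).
Proof. reflexivity. Qed.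

Lemma qv_approx_sub n jl u v : v <= u ->
  qv_approx p k x n u jl - qv_approx p k x n v jl =
  sum_upto (k n) (fun i =>
    if Rle_dec (p n i) v then 0 else if Rle_dec (p n i) u then qv_incr n jl i else 0).
Proof.
  intros Hvu. rewrite !qv_approx_sum, sum_upto_sub. apply sum_upto_ext. intros i _.
  destruct (Rle_dec (p n i) u), (Rle_dec (p n i) v); lra.
Qed.

Lemma qv_approx_const n jl u v : v <= u ->
  (forall i, (i < k n)%nat -> v < p n i -> u < p n i) ->
  qv_approx p k x n u jl = qv_approx p k x n v jl.
Proof.
  intros Hvu Hgap. apply Rminus_diag_uniq. rewrite qv_approx_sub by auto.
  apply sum_upto_zero. intros i Hi.
  destruct (Rle_dec (p n i) v) as [|Hv]; [reflexivity|].
  destruct (Rle_dec (p n i) u) as [Hu|]; [|reflexivity].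
  exfalso. specialize (Hgap i Hi). lra.
Qed.

Lemma qv_approx_cadlag (P : nat * nat -> Prop) n : cadlag P (qv_approx p k x n).
Proof.
  intros jl _. split.
  - intros t _ eps Heps. destruct (points_gap (p n) (k n) t) as [d [Hd Hgap]].
    exists d. split; auto. intros s Hs.
    rewrite (qv_approx_const n jl s t), Rminus_diag, Rabs_R0; [auto | lra|].
    intros i Hi Hti. destruct (Rlt_le_dec s (p n i)) as [|Hsi]; auto.
    assert (d <= Rabs (p n i - t)) by (apply Hgap; auto; lra).
    rewrite Rabs_right in * by lra. lra.
  - intros t _. destruct (points_gap (p n) (k n) t) as [d [Hd Hgap]].
    exists (qv_approx p k x n (t - d) jl). intros eps Heps.
    exists d. split; auto. intros s _ Hs.
    rewrite (qv_approx_const n jl s (t - d)), Rminus_diag, Rabs_R0; [auto | lra|].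
    intros i Hi Hti. destruct (Rlt_le_dec s (p n i)) as [|Hsi]; auto.
    assert (d <= Rabs (p n i - t)) by (apply Hgap; auto; lra).
    rewrite Rabs_left in * by lra. lra.
Qed.

Lemma qv_incr_diag_le n j i u v : (i < k n)%nat -> v < p n i <= u ->
  qv_incr n (j, j) i <= qv_approx p k x n u (j, j) - qv_approx p k x n v (j, j).
Proof.
  intros Hi Hvu. rewrite qv_approx_sub by lra.
  eapply Rle_trans; [|apply (sum_upto_ge_term _ _ i); auto].
  - cbv beta. destruct (Rle_dec (p n i) v), (Rle_dec (p n i) u); lra.
  - intros i' _. cbv beta. assert (0 <= qv_incr n (j, j) i') by apply Rle_0_sqr.
    destruct (Rle_dec (p n i') v), (Rle_dec (p n i') u); lra.
Qed.

Hypothesis Hp : partition_seq p k.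

Lemma qv_approx_left_jump_le n jl u B : 0 <= B ->
  (forall i, (i < k n)%nat -> p n i = u -> Rabs (qv_incr n jl i) <= B) ->
  exists d, 0 < d /\ forall v, u - d < v < u ->
    Rabs (qv_approx p k x n u jl - qv_approx p k x n v jl) <= B.
Proof.
  intros HB Hbound. destruct (points_gap (p n) (k n) u) as [d [Hd Hgap]].
  exists d. split; auto. intros v Hv.
  assert (Hnone : forall i, (i < k n)%nat -> v < p n i -> u <= p n i).
  { intros i Hi Hvi. destruct (Rle_lt_dec u (p n i)) as [|Hiu]; auto.
    assert (d <= Rabs (p n i - u)) by (apply Hgap; auto; lra).
    rewrite Rabs_left in * by lra. lra. }
  rewrite qv_approx_sub by lra.
  apply Rabs_sum_upto_single; auto.
  - intros i i' Hi Hi' Hnz Hnz'.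
    destruct (Rle_dec (p n i) v), (Rle_dec (p n i) u); try lra.
    destruct (Rle_dec (p n i') v), (Rle_dec (p n i') u); try lra.
    assert (p n i = p n i') by (pose proof (Hnone i Hi); pose proof (Hnone i' Hi'); lra).
    destruct (Nat.lt_trichotomy i i') as [Hlt|[Heq|Hlt]]; auto; exfalso;
      [ assert (p n i < p n i') | assert (p n i' < p n i) ];
      try (apply (partition_lt p k Hp); lia); lra.
  - intros i Hi. destruct (Rle_dec (p n i) v); [rewrite Rabs_R0; auto|].
    destruct (Rle_dec (p n i) u); [|rewrite Rabs_R0; auto].
    apply Hbound; auto. specialize (Hnone i Hi). lra.
Qed.

Variables (m : nat) (Qx : R -> nat * nat -> R).

Lemma qv_J1_limit_continuous :
  continuous_on_Rplus (vidx m) x -> cadlag (midx m) Qx ->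
  J1_conv (midx m) (qv_approx p k x) Qx -> continuous_on_Rplus (midx m) Qx.
Proof.
  intros Hx HQ HJ. apply cadlag_continuous; auto.
  intros [j l] t0 L Hjl Ht0 HL. destruct Hjl as [Hj Hl]; simpl in Hj, Hl.
  symmetry. apply eq_of_Rabs_sub_le_all. intros e He.
  assert (Hr : exists r, 0 < r /\ 4 * (r * r) <= e / 4).
  { exists (Rmin 1 (e / 16)).
    assert (0 < Rmin 1 (e / 16)) by (apply Rmin_pos; lra).
    pose proof (Rmin_l 1 (e / 16)). pose proof (Rmin_r 1 (e / 16)).
    split; [auto | nra]. }
  destruct Hr as [r [Hr Hr2]].
  destruct (Hx j Hj t0 ltac:(lra) r Hr) as [dj [Hdj Hxj]].
  destruct (Hx l Hl t0 ltac:(lra) r Hr) as [dl [Hdl Hxl]].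
  set (eta := Rmin dj dl).
  assert (Heta : 0 < eta) by (apply Rmin_pos; auto).
  assert (eta <= dj) by apply Rmin_l. assert (eta <= dl) by apply Rmin_r.
  clearbody eta.
  pose proof Hp as (_ & _ & _ & _ & Hmesh).
  destruct (Hmesh (t0 + eta) (eta / 4)) as [N1 HN1]; [lra|].
  set (e' := Rmin (e / 4) (eta / 4)).
  assert (e' <= e / 4) by apply Rmin_l. assert (e' <= eta / 4) by apply Rmin_r.
  assert (0 < e') by (apply Rmin_pos; lra).
  clearbody e'.
  destruct (J1_conv_left_jump (midx m) _ _ (j, l) t0 L HJ (conj Hj Hl) Ht0 HL e')
    as [N2 HN2]; [auto|].
  destruct (HN2 (max N1 N2)) as [u [Hu [Hqu Hleft]]]; [lia|].
  set (n := max N1 N2) in *.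
  (* Near [u] the only jump of [q_n] is the one at [u], an increment of [x]
     over a partition interval close to [t0]. *)
  destruct (qv_approx_left_jump_le n (j, l) u (4 * (r * r))) as [d [Hd Hjump]]; [nra| |].
  { intros i Hi Hiu. apply Rabs_le_inv in Hu.
    assert (p n (S i) - p n i <= eta / 4) by (apply HN1; [lia | auto | lra]).
    assert (0 <= p n i) by (apply (partition_nonneg p k Hp); lia).
    assert (p n i < p n (S i)) by (apply (partition_lt p k Hp); lia).
    unfold qv_incr; simpl. apply (Rabs_mul_sub_le _ _ _ _ (x t0 j) (x t0 l));
      [apply Hxj | apply Hxj | apply Hxl | apply Hxl]; try lra; apply Rabs_def1; lra. }
  destruct (Hleft d Hd) as [v [Hv Hqv]].
  specialize (Hjump v Hv).
  apply Rabs_le_inv in Hqu, Hjump. apply Rabs_def2 in Hqv. apply Rabs_le. lra.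
Qed.

Lemma qv_loc_unif_continuous :
  cadlag (vidx m) x -> cadlag (midx m) Qx ->
  loc_unif_conv (midx m) (qv_approx p k x) Qx -> continuous_on_Rplus (vidx m) x.
Proof.
  intros Hx HQ Hconv. apply cadlag_continuous; auto.
  intros j t0 L Hj Ht0 HL.
  destruct (Req_dec L (x t0 j)) as [|Hne]; auto. exfalso.
  set (D := Rabs (x t0 j - L)).
  assert (HD : 0 < D) by (apply Rabs_pos_lt; lra).
  assert (Hjj : midx m (j, j)) by (split; auto).
  destruct (proj1 (Hx j Hj) t0 ltac:(lra) (D / 4)) as [rho [Hrho Hright]]; [lra|].
  destruct (HL (D / 4)) as [dL [HdL Hleft]]; [lra|].
  destruct (proj2 (HQ (j, j) Hjj) t0 Ht0) as [LQ HLQ].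
  destruct (loc_unif_conv_left_osc (midx m) _ _ (j, j) t0 LQ Hconv Hjj HLQ (D * D / 4))
    as [etaQ [N1 [HetaQ Hosc]]]; [nra|].
  set (eta := Rmin t0 (Rmin dL (Rmin etaQ rho))).
  assert (Heta : 0 < eta) by (repeat apply Rmin_pos; auto).
  assert (eta <= t0) by apply Rmin_l.
  assert (eta <= dL) by (eapply Rle_trans; [apply Rmin_r | apply Rmin_l]).
  assert (eta <= etaQ)
    by (eapply Rle_trans; [apply Rmin_r | eapply Rle_trans; [apply Rmin_r | apply Rmin_l]]).
  assert (eta <= rho)
    by (eapply Rle_trans; [apply Rmin_r | eapply Rle_trans; [apply Rmin_r | apply Rmin_r]]).
  destruct (partition_straddle p k Hp t0 eta Ht0 Heta) as [N2 HN2].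
  destruct (HN2 (max N1 N2)) as [i [Hi [Hpi HpSi]]]; [lia|].
  set (n := max N1 N2) in *.
  set (u := (t0 - eta + p n i) / 2).
  assert (Hbig : D * D / 4 < qv_incr n (j, j) i).
  { apply sqr_sub_gt_of_close_ends; [apply Hright | apply Hleft]; lra. }
  assert (Hsmall : Rabs (qv_approx p k x n (p n i) (j, j) - qv_approx p k x n u (j, j))
                   <= D * D / 4)
    by (apply Hosc; unfold u; try lia; lra).
  assert (qv_incr n (j, j) i
          <= qv_approx p k x n (p n i) (j, j) - qv_approx p k x n u (j, j))
    by (apply qv_incr_diag_le; auto; unfold u; lra).
  apply Rabs_le_inv in Hsmall. lra.
Qed.

End QuadraticVariation.

Theorem corollary3p7 (m : nat) (p : nat -> nat -> R) (k : nat -> nat)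
  (x : R -> nat -> R) (Qx : R -> nat * nat -> R) :
  partition_seq p k ->
  cadlag (vidx m) x ->
  cadlag (midx m) Qx ->
  J1_conv (midx m) (qv_approx p k x) Qx ->
  (loc_unif_conv (midx m) (qv_approx p k x) Qx <-> continuous_on_Rplus (vidx m) x) /\
  (forall F : (R -> nat * nat -> R) -> R,
     J1_continuous_at (midx m) F Qx ->
     Un_cv (fun n => F (qv_approx p k x n)) (F Qx)).
Proof.
  intros Hp Hx HQ HJ. split; [split|].
  - intros Hunif. exact (qv_loc_unif_continuous p k x Hp m Qx Hx HQ Hunif).
  - intros Hxc. apply (J1_conv_continuous_loc_unif _ _ _ _ (midx_In m)); auto.
    exact (qv_J1_limit_continuous p k x Hp m Qx Hxc HQ HJ).
  - intros F HF. apply HF; [intros n; apply qv_approx_cadlag | exact HJ].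
Qed.
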